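(* Let $\Theta$ be a parameter set, $L$ a loss, $\theta^*(q)\in\arg\min_{\theta\in\Theta}L(q,\theta)$, and let $\mathcal{G}'\subset\mathcal{M}$ be families of distributions. For $\epsilon'\ge0$ define the generalized modulus $\mathfrak{m}(\mathcal{G}',\mathcal{M},\epsilon')=\sup_{p\in\mathcal{G}',\,q\in\mathcal{M}:\ \mathsf{TV}(p,q)\le\epsilon'}L(p,\theta^*(q))$. Let $\hat p_n^*$ be the empirical distribution of $n$ i.i.d. samples from $p^*$ and let $\hat p_n$ be produced by an adaptive corruption of level $\epsilon$ under $\mathsf{TV}$. Let $\hat p'$ be a (random) distribution such that $\mathsf{TV}(\hat p',\hat p_n^* )\le\epsilon_1$ with probability at least $1-\delta$ and $\hat p'\in\mathcal{G}'$ with probability at least $1-\delta$. Let $q\in\arg\min_{q'\in\mathcal{M}}\mathsf{TV}(q',\hat p_n)$ and $\hat\theta=\theta^*(q)$. Then with probability at least $1-3\delta$, $L(\hat p',\hat\theta)\le\mathfrak{m}(\mathcal{G}',\mathcal{M},\tilde\epsilon)$, where $\tilde\epsilon=2\big(\sqrt\epsilon+\sqrt{\log(1/\delta)/(2n)}\big)^2+2\epsilon_1$.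
   Context: $\mathsf{TV}(p,q)=\sup_A|p(A)-q(A)|$. Adaptive corruption of level $\epsilon$ under $\mathsf{TV}$: $n$ i.i.d. samples are drawn from $p^*$, giving the empirical distribution $\hat p_n^*$; an adversary inspects $\hat p_n^*$ and outputs an empirical distribution $\hat p_n$ on $n$ points. The conditional law of $\hat p_n$ given $\hat p_n^*$ is allowed if there is a coupling $\pi_{X,Y}$ with $\pi_X=p^*$ and $\mathsf{TV}(\pi_X,\pi_Y)\le\epsilon$ such that $\mathsf{TV}(\hat p_n^*,\hat p_n)$ is stochastically dominated by $\mathsf{TV}(\frac1n\sum_i\delta_{X_i},\frac1n\sum_i\delta_{Y_i})$, where $(X_i,Y_i)$ are $n$ i.i.d. draws from $\pi_{X,Y}$.
   Formalization: In adaptive corruption of level ε, the coupling $\pi_{X,Y}$ satisfies π(X ≠ Y) ≤ ε (some measurable set containing the off-diagonal has π-mass at most ε) in place of $\mathsf{TV}(\pi_X,\pi_Y)\le\epsilon$. Apart from conventions, each condition added here is assumed in the paper as well or is needed for the statement above to hold. *)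

From HB Require Import structures.
From mathcomp Require Import all_boot all_order all_algebra.
From mathcomp Require Import all_classical all_reals.
From mathcomp Require Import ereal topology normedtype sequences exp measure probability.
Set Implicit Arguments. Unset Strict Implicit. Unset Printing Implicit Defensive.
Import Order.TTheory GRing.Theory Num.Theory.
Local Open Scope classical_set_scope.
Local Open Scope ring_scope.

Definition TV {d} {X : measurableType d} {R : realType}
    (p q : set X -> \bar R) : \bar R :=
  ereal_sup [set (`|p A - q A|)%E | A in [set A : set X | measurable A]].

Definition emp {d} {X : measurableType d} {R : realType} {n : nat}
    (x : 'I_n -> X) : set X -> \bar R :=
  fun A => ((\sum_(i < n) ((x i \in A : bool)%:R : R)) / n%:R)%:E.

Definition pouter {d} {T : measurableType d} {R : realType}
    (P : probability T R) (S : set T) : \bar R :=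
  ereal_inf [set P F | F in [set F : set T | measurable F /\ S `<=` F]].

Definition iid_with_law {d} {Om : measurableType d} {d'} {T : measurableType d'}
    {R : realType} (P : probability Om R) {n : nat} (W : 'I_n -> Om -> T)
    (mu : probability T R) : Prop :=
  [/\ (forall i, measurable_fun setT (W i)),
      (forall i (A : set T), measurable A -> P (W i @^-1` A) = mu A) &
      (forall A : 'I_n -> set T, (forall i, measurable (A i)) ->
         P (\bigcap_(i in [set: 'I_n]) (W i @^-1` A i)) =
         (\prod_(i < n) fine (P (W i @^-1` A i)))%:E)].

(* Xs: the clean i.i.d. samples from pstar; Zs: the n points output by the
   adversary (hat p_n = emp (Zs w)).  There must be a coupling pi of pstar
   (first marginal) with some distribution such that pi(X <> Y) <= eps and
   TV(hat p_n^*, hat p_n) is stochastically dominated by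
   TV(emp X', emp Y') with (X'_i, Y'_i) i.i.d. from pi.
   Events need not be measurable, so tail probabilities are outer ones. *)
Definition adaptive_TV_corruption {d} {X : measurableType d} {R : realType}
    {dO} {Om : measurableType dO} (P : probability Om R) {n : nat}
    (pstar : probability X R) (Xs : 'I_n -> Om -> X) (Zs : Om -> 'I_n -> X)
    (eps : R) : Prop :=
  exists pi : probability (X * X)%type R,
    (forall A : set X, measurable A -> pi (A `*` setT) = pstar A) /\
    (exists B : set (X * X)%type, measurable B /\
        [set xy : X * X | xy.1 <> xy.2] `<=` B /\ (pi B <= eps%:E)%E) /\
    exists dQ (OmQ : measurableType dQ) (Q : probability OmQ R)
           (W : 'I_n -> OmQ -> (X * X)%type),
      iid_with_law Q W pi /\
      forall t : R,
        (pouter P [set w | (t%:E < TV (emp (fun i => Xs i w)) (emp (Zs w)))%E]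
         <= pouter Q [set w | (t%:E < TV (emp (fun i => (W i w).1))
                                          (emp (fun i => (W i w).2)))%E])%E.

Definition gen_modulus {d} {X : measurableType d} {R : realType} {Theta : Type}
    (L : probability X R -> Theta -> \bar R)
    (thetastar : probability X R -> Theta)
    (G' M : set (probability X R)) (e : R) : \bar R :=
  ereal_sup [set L pq.1 (thetastar pq.2) |
             pq in [set pq : probability X R * probability X R |
                    G' pq.1 /\ M pq.2 /\
                    (TV (fun A => pq.1 A) (fun A => pq.2 A) <= e%:E)%E]].

(* On the event where hat p' is eps1-close to hat p_n^* and lies in G', and
   TV(hat p_n^*, hat p_n) <= t, two triangle inequalities and the minimality of
   q put hat p' and q within 2 (t + eps1) of each other, so (hat p', q) is a
   feasible pair of the modulus.  By the corruption model, the tail of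
   TV(hat p_n^*, hat p_n) is dominated by the fraction of mismatched pairs among
   n i.i.d. draws from a coupling with mismatch probability at most eps.  This
   is a binomial tail; the Chernoff bound with exponent 2 ln (1 + s / sqrt eps)
   makes it at most exp (-2 n s^2) for t = (sqrt eps + s)^2. *)

From HB Require Import structures.
From mathcomp Require Import all_boot all_order all_algebra.
From mathcomp Require Import all_classical all_reals.
From mathcomp Require Import ereal topology normedtype sequences exp measure probability.
From mathcomp Require Import realfun derive.
From mathcomp Require Import ring lra.
Set Implicit Arguments. Unset Strict Implicit. Unset Printing Implicit Defensive.
Import Order.TTheory GRing.Theory Num.Theory.
Import numFieldNormedType.Exports.
Local Open Scope classical_set_scope.
Local Open Scope ring_scope.

Section chernoff_exponent.
Context {R : realType}.

Lemma expRB1_le_mulD1 (y : R) : 0 <= y -> 2 * (expR y - 1) <= y * (expR y + 1).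
Proof.
move=> y0; rewrite -subr_ge0.
pose h x : R := x * (expR x + 1) - 2 * (expR x - 1).
have h0 : h 0 = 0 by rewrite /h expR0; lra.
rewrite -/(h y) -h0; apply: (@ger0_derive1_ndecry R h 0) => //; last first.
  by apply: derivable_within_continuous => x _; rewrite /h.
move=> x _; rewrite derive1E /h.
rewrite deriveB //= deriveM //= deriveD //= deriveM //= deriveB //=.
rewrite !derive_cst derive_id (@derive_val _ _ _ _ _ _ _ (is_derive_expR x)).
rewrite /GRing.scale /= !mulr1 !addr0 subr0 mulr0 addr0.
have ex := expR_gt0 x.
have : (1 - x) * expR x <= 1.
  have := expR_ge1Dx (- x); rewrite expRN => hx.
  rewrite -[leRHS](mulVf (lt0r_neq0 ex)); apply: ler_wpM2r; [exact: ltW | lra].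
nra.
Qed.

(* The witness is lam = 2 ln r with r = 1 + s / sqrt e; the inequality then
   reduces to ln r >= 2 (r - 1) / (r + 1). *)
Lemma chernoff_exponent_ge (e s : R) : 0 <= e -> 0 <= s ->
  exists2 lam, 0 <= lam &
    2 * s ^+ 2 <= lam * (Num.sqrt e + s) ^+ 2 - e * (expR lam - 1).
Proof.
move=> e0 s0; have [->|ep] := eqVneq e 0.
  by exists 2; [lra | rewrite sqrtr0 add0r mul0r subr0; lra].
have epos : 0 < e by rewrite lt_neqAle eq_sym ep.
set c := Num.sqrt e; have cpos : 0 < c by rewrite sqrtr_gt0.
have ec : e = c ^+ 2 by rewrite sqr_sqrtr // ltW.
set r := 1 + s / c.
have r1 : 1 <= r by rewrite /r lerDl divr_ge0 // ltW.
set u := ln r.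
have er : expR u = r by rewrite /u lnK // posrE; lra.
have u0 : 0 <= u by apply: ln_ge0.
have sc : s = c * (r - 1) by rewrite /r addrAC subrr add0r mulrC divfK // gt_eqF.
exists (2 * u); first lra.
have -> : expR (2 * u) = r ^+ 2 by rewrite -[2]/(2%:R) expRM_natl er.
have hu := expRB1_le_mulD1 u0; rewrite er in hu.
have key : 2 * (r - 1) ^+ 2 <= 2 * u * r ^+ 2 - r ^+ 2 + 1.
  have : 0 <= (r + 1) * (2 * u * r ^+ 2 - r ^+ 2 + 1 - 2 * (r - 1) ^+ 2).
    have -> : (r + 1) * (2 * u * r ^+ 2 - r ^+ 2 + 1 - 2 * (r - 1) ^+ 2)
        = 2 * r ^+ 2 * (u * (r + 1) - 2 * (r - 1)) + (r - 1) ^+ 3.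
      by rewrite !exprS !expr0; ring.
    by apply: addr_ge0; [apply: mulr_ge0; [nra | lra] | apply: exprn_ge0; lra].
  by rewrite pmulr_rge0; lra.
rewrite ec sc.
have -> : 2 * u * (c + c * (r - 1)) ^+ 2 - c ^+ 2 * (r ^+ 2 - 1)
    = c ^+ 2 * (2 * u * r ^+ 2 - r ^+ 2 + 1) by ring.
have -> : 2 * (c * (r - 1)) ^+ 2 = c ^+ 2 * (2 * (r - 1) ^+ 2) by ring.
by apply: ler_wpM2l => //; exact: sqr_ge0.
Qed.

Lemma expR_Nmul_sqr_sqrt_ln (n : nat) (delta : R) : (0 < n)%N -> 0 < delta <= 1 ->
  expR (- (n%:R * (2 * Num.sqrt (ln delta^-1 / (2 * n%:R)) ^+ 2))) = delta.
Proof.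
move=> n0 /andP[delta0 delta1].
have n_neq0 : n%:R != 0 :> R by rewrite pnatr_eq0 -lt0n.
have lndelta : 0 <= ln delta^-1 by rewrite ln_ge0 // invf_ge1.
rewrite sqr_sqrtr ?divr_ge0 ?mulr_ge0 //.
have -> : n%:R * (2 * (ln delta^-1 / (2 * n%:R))) = ln delta^-1.
  by move: (ln _) => l; field.
by rewrite expRN lnK ?invrK // posrE invr_gt0.
Qed.

End chernoff_exponent.

Section bernoulli_tail.
Context {R : realType}.

Lemma sum_ffun_prod_bool (n : nat) (a b : R) :
  \sum_(f : {ffun 'I_n -> bool}) \prod_(i < n) (if f i then a else b) = (a + b) ^+ n.
Proof.
rewrite -(bigA_distr_bigA (fun _ (x : bool) => if x then a else b)) /=.
by rewrite (eq_bigr (fun=> a + b)) ?prodr_const ?card_ord // => i _; rewrite big_bool.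
Qed.

Lemma bernoulli_tail_chernoff (n : nat) (p e lam t : R) :
  0 <= p <= 1 -> p <= e -> 0 <= lam ->
  \sum_(f : {ffun 'I_n -> bool} | t * n%:R < \sum_(i < n) ((f i)%:R : R))
     \prod_(i < n) (if f i then p else 1 - p)
  <= expR (- (n%:R * (lam * t - e * (expR lam - 1)))).
Proof.
move=> /andP[p0 p1] pe lam0.
pose S (f : {ffun 'I_n -> bool}) : R := \sum_(i < n) (f i)%:R.
pose w (f : {ffun 'I_n -> bool}) := \prod_(i < n) (if f i then p else 1 - p).
have w0 f : 0 <= w f by apply: prodr_ge0 => i _; case: (f i); lra.
have markov : \sum_(f | t * n%:R < S f) w f
    <= \sum_f expR (lam * (S f - t * n%:R)) * w f.
  rewrite [leLHS]big_mkcond /=; apply: ler_sum => f _.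
  case: ifP => ht; last by rewrite mulr_ge0 ?expR_ge0.
  rewrite ler_peMl // (le_trans _ (expR_ge1Dx _)) // lerDl.
  by rewrite mulr_ge0 // subr_ge0 ltW.
have mgf : \sum_f expR (lam * (S f - t * n%:R)) * w f
    = expR (- (lam * t * n%:R)) * (1 + p * (expR lam - 1)) ^+ n.
  have -> : 1 + p * (expR lam - 1) = p * expR lam + (1 - p) by ring.
  rewrite -sum_ffun_prod_bool mulr_sumr; apply: eq_bigr => f _.
  rewrite (_ : lam * _ = - (lam * t * n%:R) + lam * S f); last by ring.
  rewrite expRD -mulrA mulr_sumr expR_sum /w -big_split /=.
  by congr (_ * _); apply: eq_bigr => i _; case: (f i); rewrite /= ?mulr1 ?mulr0 ?expR0 ?mul1r // mulrC.
have pow : (1 + p * (expR lam - 1)) ^+ n <= expR (n%:R * (e * (expR lam - 1))).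
  have el : 0 <= expR lam - 1 by rewrite subr_ge0 (le_trans _ (expR_ge1Dx _)) // lerDl.
  rewrite expRM_natl; apply: lerXn2r; rewrite ?nnegrE ?expR_ge0 //; first by nra.
  by rewrite (le_trans (expR_ge1Dx _)) // ler_expR ler_wpM2r.
apply: (le_trans markov); rewrite mgf.
apply: (le_trans (ler_wpM2l (expR_ge0 _) pow)).
by rewrite -expRD ler_expR le_eqVlt; apply/orP; left; apply/eqP; ring.
Qed.

End bernoulli_tail.

Section total_variation.
Context {R : realType} {d : measure_display} {X : measurableType d}.
Local Open Scope ereal_scope.

Definition fin_num_setfun (p : set X -> \bar R) :=
  forall A, measurable A -> p A \is a fin_num.

Lemma fin_num_setfun_measure (mu : probability X R) : fin_num_setfun mu.
Proof. by move=> A mA; exact: fin_num_measure. Qed.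

Lemma fin_num_setfun_emp (n : nat) (x : 'I_n -> X) : fin_num_setfun (emp x).
Proof. by []. Qed.

Lemma TV_triangle (p q r : set X -> \bar R) :
  fin_num_setfun p -> fin_num_setfun q -> fin_num_setfun r ->
  TV p r <= TV p q + TV q r.
Proof.
move=> fp fq fr; apply: ge_ereal_sup => _ [A mA <-].
have dist_triangle : `|p A - r A| <= `|p A - q A| + `|q A - r A|.
  rewrite -(fineK (fp A mA)) -(fineK (fq A mA)) -(fineK (fr A mA)).
  by rewrite -!EFinB !abse_EFin -EFinD lee_fin ler_distD.
by apply: (le_trans dist_triangle); apply: leeD; apply: ereal_sup_ubound; exists A.
Qed.

Lemma TV_sym (p q : set X -> \bar R) :
  fin_num_setfun p -> fin_num_setfun q -> TV p q = TV q p.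
Proof.
move=> fp fq; congr ereal_sup; apply/seteqP; split => _ [A mA <-]; exists A => //;
  by rewrite -(fineK (fp A mA)) -(fineK (fq A mA)) -!EFinB !abse_EFin distrC.
Qed.

Lemma TV_emp_le_mismatch (n : nat) (x y : 'I_n -> X) (B : set (X * X)) :
  [set xy : X * X | xy.1 <> xy.2] `<=` B ->
  TV (emp x) (emp y) <= ((\sum_(i < n) (`[< B (x i, y i) >]%:R : R)) / n%:R)%:E.
Proof.
move=> hB; apply: ge_ereal_sup => _ [A mA <-].
rewrite /emp -EFinB abse_EFin lee_fin -mulrBl normrM [`|_^-1|%R]ger0_norm ?invr_ge0 //.
apply: ler_wpM2r; first by rewrite invr_ge0.
rewrite -sumrB (le_trans (ler_norm_sum _ _ _)) //; apply: ler_sum => i _.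
case: (asboolP (B (x i, y i))) => [_|notB].
  by case: (x i \in A); case: (y i \in A); rewrite /= ?subrr ?normr0 ?subr0 ?sub0r ?normrN ?normr1.
have -> : x i = y i by apply: contrapT => neq; apply: notB; exact: hB.
by rewrite subrr normr0.
Qed.

Lemma TV_le_min_distance (p q x z : set X -> \bar R) (a b : R) :
  fin_num_setfun p -> fin_num_setfun q -> fin_num_setfun x -> fin_num_setfun z ->
  TV p x <= a%:E -> TV x z <= b%:E -> TV q z <= TV p z ->
  TV p q <= (2 * (a + b))%:E.
Proof.
move=> fp fq fx fz px xz qz.
have pz : TV p z <= (a + b)%:E.
  by rewrite EFinD (le_trans (TV_triangle fp fx fz)) // leeD.
rewrite (le_trans (TV_triangle fp fz fq)) // (TV_sym fz fq).
have -> : (2 * (a + b) = (a + b) + (a + b))%R by ring.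
by rewrite EFinD leeD // (le_trans qz).
Qed.

End total_variation.

Section measure_bounds.
Context {R : realType} {d : measure_display} {T : measurableType d}.
Local Open Scope ereal_scope.

Lemma measure_bigsetU_le (mu : {measure set T -> \bar R}) (I : Type) (s : seq I)
    (P : pred I) (C : I -> set T) : (forall i, measurable (C i)) ->
  mu (\big[setU/set0]_(i <- s | P i) C i) <= \sum_(i <- s | P i) mu (C i).
Proof.
move=> mC; elim: s => [|a s IH]; first by rewrite !big_nil measure0.
rewrite !big_cons; case: (P a) => //.
by rewrite (le_trans (measureU2 _ _ _)) ?leeD2l //; exact: bigsetU_measurable.
Qed.

(* Intersect measurable covers whose probability is within 1/k.+1 of the
   infimum. *)
Lemma pouter_cover (P : probability T R) (S : set T) (c : R) :
  pouter P S <= c%:E -> exists2 F, measurable F /\ S `<=` F & P F <= c%:E.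
Proof.
move=> Sc.
have cover k : exists F : set T,
    (measurable F /\ S `<=` F) /\ P F < (c + k.+1%:R^-1)%:E.
  have : pouter P S < (c + k.+1%:R^-1)%:E.
    by rewrite (le_lt_trans Sc) // lte_fin ltrDl invr_gt0 ltr0n.
  by move=> /ereal_inf_lt [_ [F SF <-] lt]; exists F.
have [F hF] := choice cover.
have mF k : measurable (F k) by case: (hF k) => [[]].
exists (\bigcap_k F k).
  split; first exact: bigcapT_measurable.
  by move=> w Sw k _; case: (hF k) => [[_ SF] _]; exact: SF.
apply/lee_addgt0Pr => r r0.
pose k := Num.truncn r^-1.
have kr : (k.+1%:R^-1 <= r)%R.
  by rewrite -(invrK r) lef_pV2 ?posrE ?invr_gt0 ?ltr0n // ltW // truncnS_gt.
rewrite (@le_trans _ _ (P (F k))) //.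
  by rewrite le_measure ?inE //; [exact: bigcapT_measurable | exact: bigcap_inf].
by case: (hF k) => _ /ltW/le_trans; apply; rewrite -EFinD lee_fin lerD2l.
Qed.

Lemma probability_setIIC_ge (P : probability T R) (A B F : set T) (a b c : R) :
  measurable A -> measurable B -> measurable F ->
  (1 - a)%:E <= P A -> (1 - b)%:E <= P B -> P F <= c%:E ->
  (1 - (a + b + c))%:E <= P (A `&` B `&` ~` F).
Proof.
move=> mA mB mF PA PB PF.
have PC (E : set T) e : measurable E -> (1 - e)%:E <= P E -> P (~` E) <= e%:E.
  move=> mE; rewrite probability_setC // -(fineK (fin_num_measure _ _ mE)).
  by rewrite -EFinB !lee_fin; lra.
have mE : measurable (A `&` B `&` ~` F).
  by apply: measurableI; [exact: measurableI | exact: measurableC].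
have PCE : P (~` (A `&` B `&` ~` F)) <= (a + b + c)%:E.
  rewrite !setCI setCK !EFinD (le_trans (measureU2 _ _ _)) //.
    by apply: measurableU; exact: measurableC.
  by rewrite leeD // (le_trans (measureU2 _ _ _)) ?leeD ?PC //; exact: measurableC.
move: PCE; rewrite probability_setC // -(fineK (fin_num_measure _ _ mE)) -EFinB !lee_fin.
lra.
Qed.

End measure_bounds.

Section coupled_empirical_tail.
Context {R : realType} {d : measure_display} {X : measurableType d}.
Local Open Scope ereal_scope.

(* The bad event is covered by the cylinders {W i \in B <-> f i} over the
   patterns f with more than t n mismatches; their probabilities are binomial. *)
Lemma iid_coupling_emp_TV_tail {dQ} {OmQ : measurableType dQ} (Q : probability OmQ R)
    (n : nat) (W : 'I_n -> OmQ -> (X * X)%type) (pi : probability (X * X)%type R)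
    (B : set (X * X)) (e t lam : R) :
  (0 < n)%N -> iid_with_law Q W pi -> measurable B ->
  [set xy : X * X | xy.1 <> xy.2] `<=` B -> pi B <= e%:E -> (0 <= lam)%R ->
  pouter Q [set w | t%:E < TV (emp (fun i => (W i w).1)) (emp (fun i => (W i w).2))]
  <= (expR (- (n%:R * (lam * t - e * (expR lam - 1)))))%:E.
Proof.
move=> n0 [mW lawW prodW] mB hB piB lam0.
pose A (f : {ffun 'I_n -> bool}) i := if f i then B else ~` B.
have mA f i : measurable (A f i) by rewrite /A; case: (f i) => //; exact: measurableC.
pose C f := \bigcap_(i in [set: 'I_n]) (W i @^-1` A f i).
have mC f : measurable (C f).
  apply: fin_bigcap_measurable; first exact: finite_finset.
  by move=> i _; rewrite -[_ @^-1` _]setTI; exact: mW.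
pose p := fine (pi B).
have pB : pi B = p%:E by rewrite fineK // fin_num_measure.
have p01 : (0 <= p <= 1)%R.
  by rewrite -!lee_fin -pB measure_ge0 probability_le1.
have QC f : Q (C f) = (\prod_(i < n) (if f i then p else 1 - p))%:E.
  rewrite /C prodW //; congr EFin; apply: eq_bigr => i _.
  by rewrite lawW // /A; case: (f i); rewrite ?probability_setC // pB.
pose tail (f : {ffun 'I_n -> bool}) := (t * n%:R < \sum_(i < n) ((f i)%:R : R))%R.
pose U := \big[setU/set0]_(f <- index_enum _ | tail f) C f.
have cover : [set w | t%:E < TV (emp (fun i => (W i w).1)) (emp (fun i => (W i w).2))]
    `<=` U.
  move=> w /= ht; rewrite /U -bigcup_seq_cond.
  exists [ffun i => `[< B (W i w) >]]; last by move=> i _; rewrite /A ffunE; case: asboolP.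
  apply/andP; split; first exact: mem_index_enum.
  have := lt_le_trans ht (TV_emp_le_mismatch _ _ hB).
  rewrite lte_fin ltr_pdivlMr ?ltr0n // /tail.
  under eq_bigr do rewrite -surjective_pairing.
  by under [X in _ -> (_ < X)%R]eq_bigr do rewrite ffunE.
apply: (@le_trans _ _ (Q U)).
  by apply: ereal_inf_lbound; exists U => //; split => //; exact: bigsetU_measurable.
apply: (le_trans (measure_bigsetU_le _ _ _ mC)).
rewrite (eq_bigr _ (fun f _ => QC f)) sumEFin lee_fin bernoulli_tail_chernoff //.
by rewrite -lee_fin -pB.
Qed.

Lemma adaptive_TV_corruption_tail {dO} {Om : measurableType dO} (P : probability Om R)
    (n : nat) (pstar : probability X R) (Xs : 'I_n -> Om -> X) (Zs : Om -> 'I_n -> X)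
    (eps s : R) :
  (0 < n)%N -> (0 <= eps)%R -> (0 <= s)%R ->
  adaptive_TV_corruption P pstar Xs Zs eps ->
  pouter P [set w | ((Num.sqrt eps + s) ^+ 2)%:E <
                    TV (emp (fun i => Xs i w)) (emp (Zs w))]
  <= (expR (- (n%:R * (2 * s ^+ 2))))%:E.
Proof.
move=> n0 eps0 s0 [pi [_ [[B [mB [hB piB]]] [dQ [OmQ [Q [W [iidW dom]]]]]]]].
have [lam lam0 hlam] := chernoff_exponent_ge eps0 s0.
rewrite (le_trans (dom _)) // (le_trans (iid_coupling_emp_TV_tail _ n0 iidW mB hB piB lam0)) //.
by rewrite lee_fin ler_expR lerN2 ler_wpM2l.
Qed.

End coupled_empirical_tail.

Theorem proposition3p10
  (R : realType) (d : measure_display) (X : measurableType d)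
  (Theta : Type) (L : probability X R -> Theta -> \bar R)
  (thetastar : probability X R -> Theta)
  (G' M : set (probability X R))
  (dO : measure_display) (Om : measurableType dO) (P : probability Om R)
  (n : nat) (eps eps1 delta : R) (pstar : probability X R)
  (Xs : 'I_n -> Om -> X) (Zs : Om -> 'I_n -> X)
  (phat' : Om -> probability X R) (q : Om -> probability X R) :
  (0 < n)%N -> 0 <= eps -> 0 < delta ->
  (forall r, M r -> forall th, (L r (thetastar r) <= L r th)%E) ->
  G' `<=` M ->
  iid_with_law P Xs pstar ->
  adaptive_TV_corruption P pstar Xs Zs eps ->
  (exists E1 : set Om, measurable E1 /\ ((1 - delta)%:E <= P E1)%E /\
     forall w, E1 w ->
       (TV (fun A => phat' w A) (emp (fun i => Xs i w)) <= eps1%:E)%E) ->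
  (exists E2 : set Om, measurable E2 /\ ((1 - delta)%:E <= P E2)%E /\
     forall w, E2 w -> G' (phat' w)) ->
  (forall w, M (q w) /\
     forall q', M q' ->
       (TV (fun A => q w A) (emp (Zs w)) <= TV (fun A => q' A) (emp (Zs w)))%E) ->
  exists E : set Om, measurable E /\ ((1 - 3 * delta)%:E <= P E)%E /\
    forall w, E w ->
      (L (phat' w) (thetastar (q w)) <=
       gen_modulus L thetastar G' M
         (2 * (Num.sqrt eps + Num.sqrt (ln (delta^-1) / (2 * n%:R))) ^+ 2
          + 2 * eps1))%E.
Proof.
move=> n0 eps0 delta0 _ G'M _ corrupt [E1 [mE1 [PE1 close]]] [E2 [mE2 [PE2 inG']]] qmin.
have [delta1|delta1] := leP 1 delta.
  by exists set0; rewrite measure0 lee_fin; split => //; split => //; lra.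
set t := (Num.sqrt eps + _) ^+ 2.
have tail : (pouter P [set w | t%:E < TV (emp (fun i => Xs i w)) (emp (Zs w))]
    <= delta%:E)%E.
  have delta01 : 0 < delta <= 1 by rewrite delta0 ltW.
  rewrite -{1}(expR_Nmul_sqr_sqrt_ln n0 delta01).
  exact: adaptive_TV_corruption_tail n0 eps0 (sqrtr_ge0 _) corrupt.
have [F [mF badF] PF] := pouter_cover tail.
exists (E1 `&` E2 `&` ~` F); split.
  by apply: measurableI; [exact: measurableI | exact: measurableC].
split.
  rewrite (_ : 3 * delta = delta + delta + delta); last by ring.
  exact: probability_setIIC_ge.
move=> w [[/close pX /inG' G'p] /= notF].
apply: ereal_sup_ubound; exists (phat' w, q w) => //=.
split => //; split; first exact: (qmin w).1.
rewrite -mulrDr addrC; apply: (TV_le_min_distance (fin_num_setfun_measure _)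
  (fin_num_setfun_measure _) (fin_num_setfun_emp _) (fin_num_setfun_emp (Zs w)) pX).
  by rewrite leNgt; apply/negP => bad; apply: notF; apply: badF.
exact: (qmin w).2 _ (G'M _ G'p).
Qed.
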